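(* Let $(\mathscr{C},T)$ be a site and equip the category $\mathrm{PSh}(\mathscr{C})$ of presheaves on $\mathscr{C}$ with the Grothendieck topology $\mathrm{Pre}(T)$. Then the Yoneda embedding $\mathscr{Y}:\mathscr{C}\to\mathrm{PSh}(\mathscr{C})$, $X\mapsto\mathrm{Hom}_{\mathscr{C}}(-,X)$, is continuous. If $T$ is singleton, it is cocontinuous.
   Context: All categories are locally small. A Grothendieck topology $T$ on $\mathscr{C}$ assigns to each object $X$ a set of families $(\pi_i:U_i\to X)_{i\in I}$ (''coverings'') such that isomorphisms form singleton coverings, coverings of members of a covering compose to coverings, and coverings pull back (pullbacks existing) along arbitrary morphisms to coverings; it is singleton if every covering consists of one morphism. A morphism is universal if its pullback along every morphism exists. $\pi:Y\to X$ is $T$-locally split if there is a covering $(\pi_i:U_i\to X)$ and $\rho_i:U_i\to Y$ with $\pi\circ\rho_i=\pi_i$. $\mathrm{Pre}(T)$ is the singleton Grothendieck topology on $\mathrm{PSh}(\mathscr{C})$ (functors $\mathscr{C}^{op}\to\mathrm{Set}$) in which a morphism $\phi:\mathcal{F}\to\mathcal{G}$ is a covering iff for every object $X$ of $\mathscr{C}$ and every $\psi\in\mathcal{G}(X)$ there are a $T$-covering $(\pi_i:U_i\to X)_{i\in I}$ and elements $\psi'_i\in\mathcal{F}(U_i)$ with $\pi_i^*\psi=\phi_{U_i}(\psi'_i)$. A functor $\mathscr{F}:(\mathscr{C}_1,T_1)\to(\mathscr{C}_2,T_2)$ is continuous if it sends universal $T_1$-locally split morphisms to universal $T_2$-locally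 split morphisms and preserves fibre products with universal $T_1$-locally split morphisms; it is cocontinuous if for every object $X$ of $\mathscr{C}_1$ and every universal $T_2$-locally split $\pi:Y\to\mathscr{F}(X)$ there are a universal $T_1$-locally split $\pi':Y'\to X$ and $r:\mathscr{F}(Y')\to Y$ with $\pi\circ r=\mathscr{F}(\pi')$. *)

From Stdlib Require Import FunctionalExtensionality ProofIrrelevance.

Set Universe Polymorphism.
Set Implicit Arguments.

(** * Categories (hom-types play the role of hom-sets; equality of
      morphisms is Leibniz equality) *)
Record Category := {
  Ob :> Type;
  Hom : Ob -> Ob -> Type;
  comp : forall {X Y Z : Ob}, Hom Y Z -> Hom X Y -> Hom X Z;
  idm : forall X : Ob, Hom X X;
  comp_assoc : forall X Y Z W (h : Hom Z W) (g : Hom Y Z) (f : Hom X Y),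
      comp h (comp g f) = comp (comp h g) f;
  comp_id_l : forall X Y (f : Hom X Y), comp (idm Y) f = f;
  comp_id_r : forall X Y (f : Hom X Y), comp f (idm X) = f }.

Arguments Hom {C} X Y : rename.
Arguments comp {C X Y Z} g f : rename.
Arguments idm {C} X : rename.

Section CatNotions.
Context {C : Category}.

Definition is_iso {X Y : C} (f : Hom X Y) : Prop :=
  exists g : Hom Y X, comp g f = idm X /\ comp f g = idm Y.

Definition is_pullback {X A B P : C} (f : Hom A X) (g : Hom B X)
    (p1 : Hom P A) (p2 : Hom P B) : Prop :=
  comp f p1 = comp g p2 /\
  forall (W : C) (a : Hom W A) (b : Hom W B), comp f a = comp g b ->
    exists h : Hom W P, (comp p1 h = a /\ comp p2 h = b) /\
      forall h' : Hom W P, comp p1 h' = a -> comp p2 h' = b -> h' = h.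

Definition has_pullback {X A B : C} (f : Hom A X) (g : Hom B X) : Prop :=
  exists (P : C) (p1 : Hom P A) (p2 : Hom P B), is_pullback f g p1 p2.

Definition universal {Y X : C} (pi : Hom Y X) : Prop :=
  forall (Z : C) (g : Hom Z X), has_pullback pi g.

Record Family (X : C) := {
  fI : Type;
  fU : fI -> Ob C;
  fpi : forall i : fI, Hom (fU i) X }.

Definition Topology := forall X : C, Family X -> Prop.

Definition singleton_family {Y X : C} (f : Hom Y X) : Family X :=
  {| fI := unit; fU := fun _ => Y; fpi := fun _ => f |}.

Definition comp_family {X : C} (F : Family X)
    (G : forall i : fI F, Family (fU F i)) : Family X :=
  {| fI := {i : fI F & fI (G i)};
     fU := fun ij => fU (G (projT1 ij)) (projT2 ij);
     fpi := fun ij => comp (fpi F (projT1 ij)) (fpi (G (projT1 ij)) (projT2 ij)) |}.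

Definition is_topology (T : Topology) : Prop :=
  (forall (X Y : C) (f : Hom Y X), is_iso f -> T X (singleton_family f)) /\
  (forall (X : C) (F : Family X), T X F ->
     forall G : forall i : fI F, Family (fU F i),
       (forall i, T (fU F i) (G i)) -> T X (comp_family F G)) /\
  (forall (X : C) (F : Family X) (Y : C) (f : Hom Y X), T X F ->
     (forall i, has_pullback (fpi F i) f) /\
     forall (P : fI F -> Ob C) (p1 : forall i, Hom (P i) (fU F i))
            (p2 : forall i, Hom (P i) Y),
       (forall i, is_pullback (fpi F i) f (p1 i) (p2 i)) ->
       T Y {| fI := fI F; fU := P; fpi := p2 |}).

Definition singleton_topology (T : Topology) : Prop :=
  forall (X : C) (F : Family X), T X F -> exists i0 : fI F, forall i, i = i0.

Definition locally_split (T : Topology) {Y X : C} (pi : Hom Y X) : Prop :=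
  exists F : Family X, T X F /\
    exists rho : forall i : fI F, Hom (fU F i) Y,
      forall i, comp pi (rho i) = fpi F i.

Definition univ_loc_split (T : Topology) {Y X : C} (pi : Hom Y X) : Prop :=
  universal pi /\ locally_split T pi.

End CatNotions.

Arguments Family : clear implicits.
Arguments Topology : clear implicits.

Record Functor (C D : Category) := {
  F0 :> Ob C -> Ob D;
  F1 : forall {X Y : C}, Hom X Y -> Hom (F0 X) (F0 Y);
  F1_id : forall X : C, F1 (idm X) = idm (F0 X);
  F1_comp : forall (X Y Z : C) (g : Hom Y Z) (f : Hom X Y),
      F1 (comp g f) = comp (F1 g) (F1 f) }.

Arguments F1 {C D} F {X Y} f : rename.

Definition continuous {C1 C2 : Category} (T1 : Topology C1) (T2 : Topology C2)
    (F : Functor C1 C2) : Prop :=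
  (forall (X Y : C1) (pi : Hom Y X),
      univ_loc_split T1 pi -> univ_loc_split T2 (F1 F pi)) /\
  (forall (X Y Z P : C1) (pi : Hom Y X) (g : Hom Z X) (p1 : Hom P Y) (p2 : Hom P Z),
      univ_loc_split T1 pi -> is_pullback pi g p1 p2 ->
      is_pullback (F1 F pi) (F1 F g) (F1 F p1) (F1 F p2)).

Definition cocontinuous {C1 C2 : Category} (T1 : Topology C1) (T2 : Topology C2)
    (F : Functor C1 C2) : Prop :=
  forall (X : C1) (Y : C2) (pi : Hom Y (F X)),
    univ_loc_split T2 pi ->
    exists (Y' : C1) (pi' : Hom Y' X) (r : Hom (F Y') Y),
      univ_loc_split T1 pi' /\ comp pi r = F1 F pi'.

Section Presheaves.
Context (C : Category).

Record Presheaf := {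
  P0 :> Ob C -> Type;
  P1 : forall {X Y : C}, Hom X Y -> P0 Y -> P0 X;
  P1_id : forall (X : C) (x : P0 X), P1 (idm X) x = x;
  P1_comp : forall (X Y Z : C) (g : Hom Y Z) (f : Hom X Y) (x : P0 Z),
      P1 (comp g f) x = P1 f (P1 g x) }.

Arguments P1 p {X Y} f x : rename.

Record NatTrans (F G : Presheaf) := {
  eta :> forall X : C, F X -> G X;
  eta_nat : forall (X Y : C) (f : Hom X Y) (x : F Y),
      eta X (P1 F f x) = P1 G f (eta Y x) }.

Lemma nat_trans_eq (F G : Presheaf) (a b : NatTrans F G) :
  (forall X x, a X x = b X x) -> a = b.
Proof.
  destruct a as [a Ha], b as [b Hb]; simpl; intros H.
  assert (E : a = b).
  { apply functional_extensionality_dep; intro X.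
    apply functional_extensionality; intro x; apply H. }
  subst b. f_equal. apply proof_irrelevance.
Qed.

Definition nt_id (F : Presheaf) : NatTrans F F.
Proof.
  refine {| eta := fun X x => x |}. intros; reflexivity.
Defined.

Definition nt_comp (F G H : Presheaf) (b : NatTrans G H) (a : NatTrans F G)
  : NatTrans F H.
Proof.
  refine {| eta := fun X x => b X (a X x) |}.
  intros X Y f x. rewrite (eta_nat a), (eta_nat b). reflexivity.
Defined.

Definition PSh : Category.
Proof.
  refine {| Ob := Presheaf; Hom := NatTrans; comp := nt_comp; idm := nt_id |};
    intros; apply nat_trans_eq; reflexivity.
Defined.

Definition PreCover (T : Topology C) {F G : Presheaf} (phi : NatTrans F G) : Prop :=
  forall (X : C) (psi : G X),
    exists U : Family C X, T X U /\
      exists psi' : forall i : fI U, F (fU U i),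
        forall i, P1 G (fpi U i) psi = phi (fU U i) (psi' i).

Definition PreT (T : Topology C) : Topology PSh :=
  fun (G : PSh) (V : Family PSh G) =>
    (exists i0 : fI V, forall i, i = i0) /\
    forall i : fI V, PreCover T (fpi V i).

Definition yoneda_ob (X : C) : Presheaf.
Proof.
  refine {| P0 := fun Z => Hom Z X; P1 := fun Z W f g => comp g f |}.
  - intros; apply comp_id_r.
  - intros; apply comp_assoc.
Defined.

Definition yoneda_hom (X Y : C) (f : Hom X Y) : NatTrans (yoneda_ob X) (yoneda_ob Y).
Proof.
  refine {| eta := (fun Z (g : yoneda_ob X Z) => (comp f g : yoneda_ob Y Z)) |}.
  intros; simpl; apply comp_assoc.
Defined.

Definition yoneda : Functor C PSh.
Proof.
  refine {| F0 := (yoneda_ob : Ob C -> Ob PSh); F1 := yoneda_hom |}.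
  - intros X; apply nat_trans_eq; intros; simpl; apply comp_id_l.
  - intros; apply nat_trans_eq; intros; simpl; symmetry; apply comp_assoc.
Defined.

End Presheaves.

(** The Yoneda embedding is continuous because [PSh(C)] has all fibre
    products, Yoneda preserves those that exist in [C], and a [T]-local
    splitting of [pi : Y -> X] pulls back along any [psi : W -> X], which
    says exactly that [Hom(-, pi)] is a [Pre(T)]-covering.  Conversely a
    [Pre(T)]-locally split [pi : G -> Hom(-, X)] is a [Pre(T)]-covering, so
    [idm X] lifts to [G] over a [T]-covering of [X]; when [T] is singleton
    that covering is one morphism [U -> X], and by the Yoneda lemma the lift
    is a map [Hom(-, U) -> G] over [pi]. *)
From Stdlib Require Import ProofIrrelevance ClassicalEpsilon.

(* Otherwise the universe of the index types of [PreT T]-coverings is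
   minimized to [Set] in the lemmas below, and they no longer apply to the
   monomorphic theorem. *)
Set Universe Polymorphism.
Unset Universe Minimization ToSet.

Section Pullbacks.
Context {C : Category}.

Lemma has_pullback_sig {X A B : C} (f : Hom A X) (g : Hom B X) :
  has_pullback f g ->
  {P : C & {p : Hom P A * Hom P B | is_pullback f g (fst p) (snd p)}}.
Proof.
  intros H. apply constructive_indefinite_description in H as [P H].
  exists P. apply constructive_indefinite_description.
  destruct H as [p1 [p2 H]]. exists (p1, p2). exact H.
Qed.

Context {X A B P : C} {f : Hom A X} {g : Hom B X} {p1 : Hom P A} {p2 : Hom P B}.
Hypothesis Hpb : is_pullback f g p1 p2.

Definition pb_lift {W : C} {a : Hom W A} {b : Hom W B} (E : comp f a = comp g b) :
  Hom W P :=
  proj1_sig (constructive_indefinite_description _ (proj2 Hpb W a b E)).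

Lemma pb_lift_spec {W : C} {a : Hom W A} {b : Hom W B} (E : comp f a = comp g b) :
  (comp p1 (pb_lift E) = a /\ comp p2 (pb_lift E) = b) /\
  forall h : Hom W P, comp p1 h = a -> comp p2 h = b -> h = pb_lift E.
Proof.
  unfold pb_lift. destruct constructive_indefinite_description as [h Hh]. exact Hh.
Qed.

Lemma pb_lift_fst {W : C} {a : Hom W A} {b : Hom W B} (E : comp f a = comp g b) :
  comp p1 (pb_lift E) = a.
Proof. apply pb_lift_spec. Qed.

Lemma pb_lift_snd {W : C} {a : Hom W A} {b : Hom W B} (E : comp f a = comp g b) :
  comp p2 (pb_lift E) = b.
Proof. apply pb_lift_spec. Qed.

Lemma pb_lift_unique {W : C} {a : Hom W A} {b : Hom W B} (E : comp f a = comp g b)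
    (h : Hom W P) :
  comp p1 h = a -> comp p2 h = b -> h = pb_lift E.
Proof. apply pb_lift_spec. Qed.

End Pullbacks.

(* [singleton_family] fixes the universe of its index type to [Set]; this
   copy leaves it free, so it can be a covering for any [Topology]. *)
Definition unit_family@{u v w | Set <= w} {C : Category@{u v}} {Y X : C}
    (f : Hom Y X) : Family@{u v w} C X :=
  {| fI := unit; fU := fun _ => Y; fpi := fun _ => f |}.

Lemma unit_cover_locally_split {C : Category} (T : Topology C) {Y X : C} (f : Hom Y X) :
  T X (unit_family f) -> locally_split T f.
Proof.
  intros Hf. exists (unit_family f). split; [exact Hf|].
  exists (fun _ => idm Y). intros i. apply comp_id_r.
Qed.

Section Topologies.
Context {C : Category} (T : Topology C) (HT : is_topology T).

Lemma covering_base_change {X : C} (F : Family C X) (HF : T X F) {W : C} (psi : Hom W X) :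
  exists (P : fI F -> C) (p1 : forall i, Hom (P i) (fU F i)) (p2 : forall i, Hom (P i) W),
    (forall i, is_pullback (fpi F i) psi (p1 i) (p2 i)) /\
    T W {| fI := fI F; fU := P; fpi := p2 |}.
Proof.
  destruct HT as [_ [_ Hbase]]. destruct (Hbase X F W psi HF) as [Hex Hcov].
  pose (pb := fun i => has_pullback_sig _ _ (Hex i)).
  exists (fun i => projT1 (pb i)), (fun i => fst (proj1_sig (projT2 (pb i)))),
    (fun i => snd (proj1_sig (projT2 (pb i)))).
  pose proof (fun i => proj2_sig (projT2 (pb i))) as Hp.
  split; [exact Hp | exact (Hcov _ _ _ Hp)].
Qed.

Lemma singleton_covering_univ_loc_split (Hs : singleton_topology T)
    {X : C} (U : Family C X) (HU : T X U) (j : fI U) :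
  univ_loc_split T (fpi U j).
Proof.
  split.
  - intros Z g. destruct HT as [_ [_ Hbase]]. exact (proj1 (Hbase X U Z g HU) j).
  - exists U. split; [exact HU|].
    assert (Hj : forall i, i = j).
    { destruct (Hs X U HU) as [j0 Hj0]. intros i. rewrite (Hj0 i), (Hj0 j). reflexivity. }
    assert (R : forall i, {r : Hom (fU U i) (fU U j) | comp (fpi U j) r = fpi U i}).
    { intros i. rewrite (Hj i). exists (idm _). apply comp_id_r. }
    exists (fun i => proj1_sig (R i)). intros i. exact (proj2_sig (R i)).
Qed.

End Topologies.

Lemma nat_trans_app {C : Category} {F G : Presheaf C} {s t : NatTrans F G} :
  s = t -> forall (V : C) (x : F V), s V x = t V x.
Proof. intros ->. reflexivity. Qed.

Section PresheafPullbacks.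
Context {C : Category} {A B X : Presheaf C} (a : NatTrans A X) (b : NatTrans B X).

Definition pullback_section (W : C) : Type :=
  {xy : A W * B W | a W (fst xy) = b W (snd xy)}.

Definition pullback_restrict {V W : C} (f : Hom V W) (s : pullback_section W) :
  pullback_section V.
Proof.
  exists (P1 A f (fst (proj1_sig s)), P1 B f (snd (proj1_sig s))). simpl.
  rewrite (eta_nat a), (eta_nat b), (proj2_sig s). reflexivity.
Defined.

Lemma pullback_section_eq {W : C} (s t : pullback_section W) :
  proj1_sig s = proj1_sig t -> s = t.
Proof. apply eq_sig_hprop. intros. apply proof_irrelevance. Qed.

Definition pullback_psh : Presheaf C.
Proof.
  refine {| P0 := pullback_section; P1 := @pullback_restrict |}.
  - intros W [[x y] E]. apply pullback_section_eq. simpl. rewrite !P1_id. reflexivity.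
  - intros W V U g f [[x y] E]. apply pullback_section_eq. simpl.
    rewrite !P1_comp. reflexivity.
Defined.

Definition pullback_pr1 : NatTrans pullback_psh A.
Proof.
  refine {| eta := fun W (s : pullback_psh W) => fst (proj1_sig s) |}. reflexivity.
Defined.

Definition pullback_pr2 : NatTrans pullback_psh B.
Proof.
  refine {| eta := fun W (s : pullback_psh W) => snd (proj1_sig s) |}. reflexivity.
Defined.

Definition pullback_pair {W : Presheaf C} (u : NatTrans W A) (v : NatTrans W B)
    (E : forall V w, a V (u V w) = b V (v V w)) : NatTrans W pullback_psh.
Proof.
  refine {| eta := fun V w => (exist _ (u V w, v V w) (E V w) : pullback_psh V) |}.
  intros V V' f w. apply pullback_section_eq. simpl.
  rewrite (eta_nat u), (eta_nat v). reflexivity.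
Defined.

Lemma pullback_psh_is_pullback :
  @is_pullback (PSh C) X A B pullback_psh a b pullback_pr1 pullback_pr2.
Proof.
  split.
  - apply nat_trans_eq. intros W s. exact (proj2_sig s).
  - intros W u v Euv. exists (pullback_pair u v (nat_trans_app Euv)). split.
    + split; apply nat_trans_eq; reflexivity.
    + intros h E1 E2. apply nat_trans_eq. intros V w.
      apply pullback_section_eq. simpl.
      rewrite <- (nat_trans_app E1), <- (nat_trans_app E2). simpl.
      destruct (h V w) as [[x y] E]. reflexivity.
Qed.

End PresheafPullbacks.

Lemma psh_universal {C : Category} {A X : PSh C} (a : Hom A X) : universal a.
Proof.
  intros B b. exists (pullback_psh a b), (pullback_pr1 a b), (pullback_pr2 a b).
  apply pullback_psh_is_pullback.
Qed.

Section PreTopology.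
Context {C : Category} (T : Topology C).

Lemma PreT_unit_family {F G : Presheaf C} (phi : NatTrans F G) :
  PreCover T phi -> PreT T (@unit_family (PSh C) F G phi).
Proof.
  intros Hphi. split; [exists tt; intros []; reflexivity|]. intros i. exact Hphi.
Qed.

Lemma PreCover_of_locally_split {F G : Presheaf C} (pi : NatTrans F G) :
  @locally_split (PSh C) (PreT T) F G pi -> PreCover T pi.
Proof.
  intros [V [[[i0 _] HV] [rho Hrho]]] X psi.
  destruct (HV i0 X psi) as [U [HU [psi' Hpsi']]].
  exists U. split; [exact HU|].
  exists (fun j => rho i0 _ (psi' j)). intros j.
  rewrite Hpsi'. symmetry. exact (nat_trans_app (Hrho i0) _ _).
Qed.

End PreTopology.

Section Yoneda.
Context {C : Category}.

Definition yoneda_elem (G : Presheaf C) {Z : C} (y : G Z) : NatTrans (yoneda_ob C Z) G.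
Proof.
  refine {| eta := fun W (h : yoneda_ob C Z W) => P1 G h y |}. intros. apply P1_comp.
Defined.

Lemma comp_yoneda_elem {F G : Presheaf C} (a : NatTrans F G) {Z : C} (y : F Z) :
  @comp (PSh C) _ _ _ a (yoneda_elem F y) = yoneda_elem G (a Z y).
Proof. apply nat_trans_eq. intros W h. apply eta_nat. Qed.

Lemma yoneda_elem_hom {Z X : C} (f : Hom Z X) :
  yoneda_elem (yoneda_ob C X) f = F1 (yoneda C) f.
Proof. apply nat_trans_eq. reflexivity. Qed.

Lemma yoneda_preserves_pullback {X A B P : C} {f : Hom A X} {g : Hom B X}
    {p1 : Hom P A} {p2 : Hom P B} :
  is_pullback f g p1 p2 ->
  is_pullback (F1 (yoneda C) f) (F1 (yoneda C) g) (F1 (yoneda C) p1) (F1 (yoneda C) p2).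
Proof.
  intros Hpb. split.
  - apply nat_trans_eq. intros V w. simpl. rewrite !comp_assoc, (proj1 Hpb). reflexivity.
  - intros W u v Euv.
    pose proof (nat_trans_app Euv) as E. simpl in E.
    unshelve eexists {| eta := fun V w => (pb_lift Hpb (E V w) : yoneda_ob C P V) |}.
    + intros V V' h w. simpl. symmetry. apply pb_lift_unique.
      * rewrite comp_assoc, pb_lift_fst, (eta_nat u). reflexivity.
      * rewrite comp_assoc, pb_lift_snd, (eta_nat v). reflexivity.
    + split.
      * split; apply nat_trans_eq; intros V w; [apply pb_lift_fst | apply pb_lift_snd].
      * intros h E1 E2. apply nat_trans_eq. intros V w. apply pb_lift_unique.
        -- exact (nat_trans_app E1 V w).
        -- exact (nat_trans_app E2 V w).
Qed.

Context (T : Topology C) (HT : is_topology T).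

Lemma yoneda_precover_of_locally_split {Y X : C} (pi : Hom Y X) :
  locally_split T pi -> PreCover T (F1 (yoneda C) pi).
Proof.
  intros [F [HF [rho Hrho]]] W psi.
  destruct (covering_base_change T HT F HF psi) as (P & p1 & p2 & Hp & HG).
  exists {| fI := fI F; fU := P; fpi := p2 |}. split; [exact HG|].
  exists (fun i => comp (rho i) (p1 i)). intros i. simpl.
  rewrite comp_assoc, Hrho. symmetry. exact (proj1 (Hp i)).
Qed.

Lemma yoneda_continuous : continuous T (PreT T) (yoneda C).
Proof.
  split.
  - intros X Y pi [_ Hsplit]. split; [apply psh_universal|].
    apply unit_cover_locally_split, PreT_unit_family,
      yoneda_precover_of_locally_split, Hsplit.
  - intros X Y Z P pi g p1 p2 _. apply yoneda_preserves_pullback.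
Qed.

Lemma yoneda_cocontinuous :
  singleton_topology T -> cocontinuous T (PreT T) (yoneda C).
Proof.
  intros Hs X G pi [_ Hsplit].
  destruct (PreCover_of_locally_split T pi Hsplit X (idm X)) as [U [HU [y Hy]]].
  destruct (Hs X U HU) as [j _].
  exists (fU U j), (fpi U j), (yoneda_elem G (y j)). split.
  - apply singleton_covering_univ_loc_split; assumption.
  - etransitivity; [apply comp_yoneda_elem|].
    rewrite <- Hy. simpl. rewrite comp_id_l. apply yoneda_elem_hom.
Qed.

End Yoneda.

Theorem mainTheorem18 (C : Category) (T : Topology C) (HT : is_topology T) :
  continuous T (PreT T) (yoneda C) /\
  (singleton_topology T -> cocontinuous T (PreT T) (yoneda C)).
Proof.
  split.
  - apply yoneda_continuous, HT.
  - apply yoneda_cocontinuous, HT.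
Qed.
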